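(* Let $0\le m\le n\le l$ with $n\ge1$, and let $([m],v,e),([n],w,f)$ be graphs with attributes in $\mathcal X,\mathcal Y$. Extend $([n],w,f)$ to $([l],w,f)$ by $w_i=x'_*$, $f_{ii}=y_0$ for $n+1\le i\le l$ and $f_{ii'}=y'_*$ whenever $\max\{i,i'\}\ge n+1$, $i\ne i'$. Then, computing GOSPA1 in the extended spaces $\mathcal X\cup\{x_*,x'_*\}$, $\mathcal Y\cup\{y_*,y'_*\}$ with the same $p$, $C_1$ and $C_{\mathcal Y}$, $$d_{\mathbb G,R_1}(([m],v,e),([n],w,f))\le d_{\mathbb G,R_1}(([m],v,e),([l],w,f)).$$
   Context: $(\mathcal X,d_{\mathcal X})$, $(\mathcal Y,d_{\mathcal Y})$ are pseudometric spaces with $\mathrm{diam}(\mathcal X)\le C_{\mathcal X}$, $\mathrm{diam}(\mathcal Y)\le C_{\mathcal Y}$, $y_0\in\mathcal Y$ a distinguished ''no edge'' element, $p\ge1$, $C_1^p\ge C_{\mathcal X}^p+\frac12C_{\mathcal Y}^p$. New points $x_*,x'_*$ are adjoined to $\mathcal X$ with $d_{\mathcal X}(x_*,x)^p=d_{\mathcal X}(x'_*,x)^p=d_{\mathcal X}(x_*,x'_* )^p=C_1^p-\frac12C_{\mathcal Y}^p$ for all $x\in\mathcal X$ (symmetric, zero self-distances), and $y_*,y'_*$ to $\mathcal Y$ with $d_{\mathcal Y}(y_*,y)=d_{\mathcal Y}(y'_*,y)=d_{\mathcal Y}(y_*,y'_* )=C_{\mathcal Y}$ for $y\in\mathcal Y$.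 A graph $([n],v,e)$ has vertex map $v$ into the (extended) vertex space and symmetric edge map $e$ into the (extended) edge space with $e_{ii}=y_0$; $S_n$ is the set of permutations of $[n]=\{1,\dots,n\}$. GOSPA1 distance (order $p$, penalty $C_1$): for graphs with $n\ge\max\{m,1\}$, with $0/0:=0$, $$d_{\mathbb G,R_1}(([m],v,e),([n],w,f))=n^{-1/p}\min_{\pi\in S_n}\Big[(n-m)C_1^p+\sum_{i\in[m]}d_{\mathcal X}(v_i,w_{\pi(i)})^p+\frac{1}{2(n-1)}\sum_{i\in[m]}\Big(\sum_{i'\in[m]}d_{\mathcal Y}(e_{ii'},f_{\pi(i)\pi(i')})^p+(n-m)C_{\mathcal Y}^p\Big)\Big]^{1/p}.$$ *)

From HB Require Import structures.
From mathcomp Require Import all_boot all_order all_algebra.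
From mathcomp Require Import fingroup perm.
From mathcomp Require Import all_classical all_reals exp.
Set Implicit Arguments. Unset Strict Implicit. Unset Printing Implicit Defensive.
Import Order.TTheory GRing.Theory Num.Theory.
Local Open Scope ring_scope.

Section Gospa.
Variable R : realType.

Definition pseudometric (T : Type) (d : T -> T -> R) :=
  [/\ forall x, d x x = 0, forall x y, 0 <= d x y, forall x y, d x y = d y x
    & forall x y z, d x z <= d x y + d y z].

Definition diam_le (T : Type) (d : T -> T -> R) (C : R) := forall x y, d x y <= C.

Definition is_graph (V E : Type) (y0 : E) (m : nat) (v : 'I_m -> V)
  (e : 'I_m -> 'I_m -> E) := (forall i j, e i j = e j i) /\ (forall i, e i i = y0).

Definition gospa_cost (V E : Type) (dV : V -> V -> R) (dE : E -> E -> R)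
  (p C1 CY : R) (m n : nat) (hmn : (m <= n)%N)
  (v : 'I_m -> V) (e : 'I_m -> 'I_m -> E) (w : 'I_n -> V) (f : 'I_n -> 'I_n -> E)
  (pi : {perm 'I_n}) : R :=
  (n - m)%:R * C1 `^ p
  + \sum_(i < m) dV (v i) (w (pi (widen_ord hmn i))) `^ p
  + (2 * (n.-1)%:R)^-1 *
    \sum_(i < m) (\sum_(i' < m)
        dE (e i i') (f (pi (widen_ord hmn i)) (pi (widen_ord hmn i'))) `^ p
      + (n - m)%:R * CY `^ p).
(* note: x / 0 = 0 in MathComp, matching the convention 0/0 := 0 *)

Definition gospa1 (V E : Type) (dV : V -> V -> R) (dE : E -> E -> R)
  (p C1 CY : R) (m n : nat) (hmn : (m <= n)%N)
  (v : 'I_m -> V) (e : 'I_m -> 'I_m -> E) (w : 'I_n -> V) (f : 'I_n -> 'I_n -> E) : R :=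
  (n%:R) `^ (- p^-1) *
  (\big[Order.min/gospa_cost dV dE p C1 CY hmn v e w f (1%g : {perm 'I_n})]_(pi : {perm 'I_n})
      gospa_cost dV dE p C1 CY hmn v e w f pi) `^ (p^-1).

End Gospa.

Inductive ext (T : Type) := Orig of T | Star | Star'.
Arguments Star {T}. Arguments Star' {T}.

Section Ext.
Variable R : realType.

Definition dX_ext (X : Type) (dX : X -> X -> R) (p C1 CY : R) (a b : ext X) : R :=
  match a, b with
  | Orig x, Orig y => dX x y
  | Star, Star => 0
  | Star', Star' => 0
  | _, _ => (C1 `^ p - CY `^ p / 2) `^ (p^-1)
  end.

Definition dY_ext (Y : Type) (dY : Y -> Y -> R) (CY : R) (a b : ext Y) : R :=
  match a, b with
  | Orig x, Orig y => dY x y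
  | Star, Star => 0
  | Star', Star' => 0
  | _, _ => CY
  end.

Definition ext_w (X : Type) (n l : nat) (w : 'I_n -> X) (i : 'I_l) : ext X :=
  match insub (nat_of_ord i) with
  | Some j => Orig (w j)
  | None => Star'
  end.

Definition ext_f (Y : Type) (y0 : Y) (n l : nat) (f : 'I_n -> 'I_n -> Y)
  (i j : 'I_l) : ext Y :=
  match insub (nat_of_ord i), insub (nat_of_ord j) with
  | Some i1, Some j1 => Orig (f i1 j1)
  | _, _ => if i == j then Orig y0 else Star'
  end.
End Ext.

From mathcomp Require Import all_boot all_order all_algebra.
From mathcomp Require Import fingroup perm.
From mathcomp Require Import all_classical all_reals exp.
From mathcomp Require Import lra.
Import Order.TTheory GRing.Theory Num.Theory.
Set Implicit Arguments. Unset Strict Implicit. Unset Printing Implicit Defensive.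
Local Open Scope ring_scope.

(* Every assignment pi in S_l of the padded graph restricts to an assignment
   s in S_n that agrees with pi on the vertices pi sends into [n].  Each other
   vertex of ([m],v,e) is matched by pi to a dummy x'_*, at cost
   C1^p - CY^p/2, which dominates d(v_i, w_(s i))^p; each edge meeting such a
   vertex is matched to a dummy y'_*, at cost CY^p, which dominates the edge
   cost under s.  Weighting the cost of s by l and that of pi by n, the C1^p
   terms then balance and the CY^p terms are absorbed by the edge weights
   1/(2(n-1)) and 1/(2(l-1)), so l cost_n(s) <= n cost_l(pi). *)

Lemma perm_restrict_last (l : nat) (pi : 'S_l.+1) : exists pi1 : 'S_l,
  forall j : 'I_l, (pi (widen_ord (leqnSn l) j) < l)%N ->
    val (pi1 j) = val (pi (widen_ord (leqnSn l) j)).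
Proof.
(* [pi2] fixes [l] and agrees with [pi] wherever [pi] stays below [l] *)
set a := (pi^-1)%g ord_max; set pi2 := (tperm a ord_max * pi)%g.
have pi2_max : pi2 ord_max = ord_max by rewrite permM tpermR /a permKV.
have pi2_lift j : pi2 (lift ord_max j) != ord_max.
  by rewrite -{2}pi2_max (inj_eq perm_inj) eq_sym neq_lift.
pose g (j : 'I_l) := odflt j (unlift ord_max (pi2 (lift ord_max j))).
have pi2_g j : pi2 (lift ord_max j) = lift ord_max (g j).
  by rewrite /g; case: unliftP => [k -> //|/eqP]; rewrite (negbTE (pi2_lift j)).
have g_inj : injective g.
  move=> j1 j2 eq_g; apply: (@lift_inj _ ord_max); apply: (@perm_inj _ pi2).
  by rewrite !pi2_g eq_g.
exists (perm g_inj) => j pij_lt; rewrite permE -[val (g j)](lift_max (g j)) -pi2_g.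
have -> : lift ord_max j = widen_ord (leqnSn l) j by apply: val_inj; exact: lift_max.
rewrite permM tpermD //; apply/eqP => eq_j.
  by move: pij_lt; rewrite -eq_j /a permKV /= ltnn.
by move/(congr1 val): eq_j (ltn_ord j) => /= <-; rewrite ltnn.
Qed.

Lemma perm_restrict (n l : nat) (hnl : (n <= l)%N) (pi : 'S_l) : exists s : 'S_n,
  forall j : 'I_n, (pi (widen_ord hnl j) < n)%N -> val (s j) = val (pi (widen_ord hnl j)).
Proof.
elim: l hnl pi => [|l IH] hnl pi.
  by exists 1%g => j; move: (leq_trans (ltn_ord j) hnl).
have [eq_n|neq_n] := eqVneq n l.+1.
  by subst n; exists pi => j _; congr (val (pi _)); exact: val_inj.
have hnl' : (n <= l)%N by rewrite -ltnS ltn_neqAle neq_n.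
case: (@perm_restrict_last l pi) => pi1 pi1_agree.
case: (IH hnl' pi1) => s s_agree.
exists s => j pij_lt.
have eq_j : widen_ord hnl j = widen_ord (leqnSn l) (widen_ord hnl' j) by exact: val_inj.
rewrite eq_j in pij_lt *.
have eq_pi1 := pi1_agree _ (leq_trans pij_lt hnl').
by rewrite s_agree eq_pi1.
Qed.

Lemma ext_w_agree (X : Type) (n l : nat) (w : 'I_n -> X) (k : 'I_n) (P : 'I_l) :
  ((P < n)%N -> val k = val P) -> ext_w w P = Orig (w k) \/ ext_w w P = Star'.
Proof.
move=> k_agree; rewrite /ext_w; case: insubP => [k' P_lt eq_k'|_]; [left|by right].
by congr (Orig (w _)); apply: val_inj; rewrite eq_k' k_agree.
Qed.

Lemma ext_f_agree (Y : Type) (y0 : Y) (n l : nat) (f : 'I_n -> 'I_n -> Y)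
  (k k' : 'I_n) (P P' : 'I_l) : P != P' ->
  ((P < n)%N -> val k = val P) -> ((P' < n)%N -> val k' = val P') ->
  ext_f y0 f P P' = Orig (f k k') \/ ext_f y0 f P P' = Star'.
Proof.
move=> /negbTE neq_P k_agree k'_agree; rewrite /ext_f.
case: (insubP 'I_n (val P)) => [j P_lt eq_j|_]; last by rewrite neq_P; right.
case: (insubP 'I_n (val P')) => [j' P'_lt eq_j'|_]; last by rewrite neq_P; right.
by left; congr (Orig (f _ _)); apply: val_inj; rewrite ?eq_j ?eq_j' ?k_agree ?k'_agree.
Qed.

Lemma ext_f_diag (Y : Type) (y0 : Y) (n l : nat) (f : 'I_n -> 'I_n -> Y) (P : 'I_l) :
  (forall k, f k k = y0) -> ext_f y0 f P P = Orig y0.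
Proof.
by move=> f_diag; rewrite /ext_f; case: insubP => [k _ _|_]; rewrite ?f_diag ?eqxx.
Qed.

Lemma mixture_le (R : realType) (A B t t' z : R) :
  0 <= B <= A -> t <= z -> t' = t \/ t' = z -> A * t <= B * t' + (A - B) * z.
Proof. by move=> /andP[B_ge0 le_BA] le_tz [->|->]; nra. Qed.

Lemma powR_invrK (R : realType) (z p : R) : 0 <= z -> 0 < p -> (z `^ p^-1) `^ p = z.
Proof. by move=> z_ge0 p_gt0; rewrite -powRrM mulVf ?gt_eqF // powRr1. Qed.

Lemma root_normalized_le (R : realType) (p N L c c' : R) :
  0 < p -> 0 < N -> 0 < L -> 0 <= c -> 0 <= c' -> L * c <= N * c' ->
  N `^ (- p^-1) * c `^ p^-1 <= L `^ (- p^-1) * c' `^ p^-1.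
Proof.
move=> p_gt0 N_gt0 L_gt0 c_ge0 c'_ge0 le_cc'.
have q_ge0 : 0 <= p^-1 by rewrite invr_ge0 ltW.
have [N_q L_q] : 0 < N `^ p^-1 /\ 0 < L `^ p^-1 by split; apply: powR_gt0.
rewrite !powRN ler_pdivrMl // mulrCA ler_pdivlMl //.
rewrite -(powRM _ (ltW L_gt0) c_ge0) -(powRM _ (ltW N_gt0) c'_ge0).
by apply: ge0_ler_powR => //; rewrite nnegrE mulr_ge0 // ltW.
Qed.

Lemma gospa_cost_ge0 (R : realType) (V E : Type) (dV : V -> V -> R) (dE : E -> E -> R)
  (p C1 CY : R) (m n : nat) (hmn : (m <= n)%N)
  (v : 'I_m -> V) (e : 'I_m -> 'I_m -> E) (w : 'I_n -> V) (f : 'I_n -> 'I_n -> E)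
  (pi : {perm 'I_n}) : 0 <= gospa_cost dV dE p C1 CY hmn v e w f pi.
Proof.
rewrite /gospa_cost !addr_ge0 ?mulr_ge0 ?invr_ge0 ?mulr_ge0 ?powR_ge0 //.
- by rewrite sumr_ge0 // => i _; rewrite powR_ge0.
- rewrite sumr_ge0 // => i _; rewrite addr_ge0 ?mulr_ge0 ?powR_ge0 ?sumr_ge0 //.
  by move=> j _; rewrite powR_ge0.
Qed.

Lemma powR_le_diam (R : realType) (T : Type) (d : T -> T -> R) (C p : R) :
  0 <= p -> pseudometric d -> diam_le d C -> forall x y, d x y `^ p <= C `^ p.
Proof.
move=> p_ge0 [_ d_ge0 _ _] le_dC x y.
by apply: ge0_ler_powR; rewrite ?nnegrE ?d_ge0 // (le_trans (d_ge0 x y)).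
Qed.

Lemma bigmin_mul_le (R : realType) (I J : finType) (F : I -> R) (G : J -> R)
  (i0 : I) (j0 : J) (L N : R) :
  0 <= L -> 0 < N -> (forall j, exists i, L * F i <= N * G j) ->
  L * \big[Order.min/F i0]_i F i <= N * \big[Order.min/G j0]_j G j.
Proof.
move=> L_ge0 N_gt0 dominated.
suff le_G j : L * \big[Order.min/F i0]_i F i <= N * G j.
  by rewrite -ler_pdivrMl //; apply: le_bigmin => [|j]; rewrite ler_pdivrMl.
have [i le_FG] := dominated j; apply: le_trans le_FG.
by rewrite ler_wpM2l ?bigmin_le.
Qed.

Lemma weighted_cost_le (R : realType) (L N M a b c y SXn SXl SYn SYl : R) :
  0 <= M -> 0 <= y ->
  L * SXn <= N * SXl + M * (L - N) * (c - y / 2) ->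
  L * a * SYn <= N * b * SYl + M * (M - 1) * (L * a - N * b) * y ->
  L * a * (N - 1) - N * b * (L - 1) <= (L - N) / 2 ->
  L * ((N - M) * c + SXn + a * (SYn + (N - M) * y * M)) <=
  N * ((L - M) * c + SXl + b * (SYl + (L - M) * y * M)).
Proof.
(* The coefficients of [c] cancel; the [y]-terms leave [M y] times the slack of
   the last hypothesis. *)
move=> M_ge0 y_ge0 le_X le_Y le_w.
have : 0 <= M * y * ((L - N) / 2 - (L * a * (N - 1) - N * b * (L - 1))).
  by rewrite !mulr_ge0 // subr_ge0.
nra.
Qed.

Lemma natr_predB (R : realType) (k : nat) : (0 < k)%N -> (k.-1)%:R = k%:R - 1 :> R.
Proof. by move=> hk; rewrite -subn1 natrB. Qed.

(* The edge factor 1/(2(k-1)) of GOSPA1; for k = 1 it is 1/0 = 0. *)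
Definition edge_weight (R : realType) (k : nat) : R := (2 * (k.-1)%:R)^-1.

Lemma edge_weight_ge0 (R : realType) (k : nat) : 0 <= edge_weight R k.
Proof. by rewrite invr_ge0 mulr_ge0. Qed.

Lemma edge_weight1 (R : realType) : edge_weight R 1 = 0.
Proof. by rewrite /edge_weight mulr0 invr0. Qed.

Lemma edge_weightK (R : realType) (k : nat) :
  (1 < k)%N -> edge_weight R k * (k%:R - 1) = 2^-1.
Proof.
move=> hk; rewrite /edge_weight -natr_predB ?(ltnW hk) // invfM -mulrA mulVf ?mulr1 //.
by rewrite pnatr_eq0 -lt0n -ltnS prednK // ltnW.
Qed.

Lemma edge_weight_le (R : realType) (n l : nat) : (1 < n)%N -> (n <= l)%N ->
  n%:R * edge_weight R l <= l%:R * edge_weight R n.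
Proof.
move=> hn hl; have hl2 := leq_trans hn hl.
rewrite /edge_weight !natr_predB ?(ltnW hn) ?(ltnW hl2) //.
have hN : (2 : R) <= n%:R by rewrite (ler_nat R 2 n).
have hNL : (n%:R : R) <= l%:R by rewrite ler_nat.
rewrite ler_pdivrMr; last lra.
rewrite mulrAC ler_pdivlMr; [nra|lra].
Qed.

Lemma edge_weight_pred_le (R : realType) (n l : nat) : (0 < n)%N -> (n <= l)%N ->
  l%:R * edge_weight R n * (n%:R - 1) - n%:R * edge_weight R l * (l%:R - 1)
  <= (l%:R - n%:R) / 2.
Proof.
move=> hn hl; have hNL : (n%:R : R) <= l%:R by rewrite ler_nat.
have [hn1|] := ltnP 1 n.
  have hl1 : (1 < l)%N by apply: leq_trans hl.
  by rewrite -!mulrA !edge_weightK //; lra.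
move=> hn1; have -> : n = 1%N by apply/eqP; rewrite eqn_leq hn1.
have hL1 : (1 : R) <= l%:R by rewrite ler1n (leq_trans hn hl).
have : 0 <= edge_weight R l * (l%:R - 1) by rewrite mulr_ge0 ?edge_weight_ge0 ?subr_ge0.
rewrite edge_weight1 mulr0 mul0r mul1r; lra.
Qed.

Section CostComparison.
Variables (R : realType) (X Y : Type) (dX : X -> X -> R) (dY : Y -> Y -> R).
Variables (p C1 CY : R) (y0 : Y).
(* [zX] is the p-th power of the distance from any vertex to a dummy vertex. *)
Local Notation zX := (C1 `^ p - CY `^ p / 2).
Hypotheses (p_gt0 : 0 < p) (zX_ge0 : 0 <= zX).
Hypothesis dX_pow_le : forall x x', dX x x' `^ p <= zX.
Hypothesis dY_pow_le : forall y y', dY y y' `^ p <= CY `^ p.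
Hypothesis dY_y0 : dY y0 y0 = 0.
Variables (m n l : nat) (hmn : (m <= n)%N) (hnl : (n <= l)%N) (n_gt0 : (0 < n)%N).
Local Notation hml := (leq_trans hmn hnl).
Variables (v : 'I_m -> X) (e : 'I_m -> 'I_m -> Y) (w : 'I_n -> X) (f : 'I_n -> 'I_n -> Y).
Hypotheses (e_diag : forall i, e i i = y0) (f_diag : forall k, f k k = y0).
Variables (s : 'S_n) (pi : 'S_l).
Local Notation sv i := (s (widen_ord hmn i)).
Local Notation piv i := (pi (widen_ord hml i)).
Hypothesis s_agrees :
  forall j : 'I_n, (pi (widen_ord hnl j) < n)%N -> val (s j) = val (pi (widen_ord hnl j)).

Let s_agrees_widen (i : 'I_m) : (piv i < n)%N -> val (sv i) = val (piv i).
Proof.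
have -> : widen_ord hml i = widen_ord hnl (widen_ord hmn i) by exact: val_inj.
exact: s_agrees.
Qed.

Local Notation tX i := (dX (v i) (w (sv i)) `^ p).
Local Notation tX' i := (dX_ext dX p C1 CY (Orig (v i)) (ext_w w (piv i)) `^ p).
Local Notation tY i i' := (dY (e i i') (f (sv i) (sv i')) `^ p).
Local Notation tY' i i' :=
  (dY_ext dY CY (Orig (e i i')) (ext_f y0 f (piv i) (piv i')) `^ p).
Local Notation a := (edge_weight R n).
Local Notation b := (edge_weight R l).

Lemma vertex_term_le (i : 'I_m) : l%:R * tX i <= n%:R * tX' i + (l%:R - n%:R) * zX.
Proof.
apply: mixture_le => //; first by rewrite ler0n ler_nat.
by case: (ext_w_agree w (@s_agrees_widen i)) => ->; [left|right; rewrite powR_invrK].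
Qed.

Lemma vertex_sum_le :
  l%:R * \sum_(i < m) tX i <= n%:R * \sum_(i < m) tX' i + m%:R * (l%:R - n%:R) * zX.
Proof.
rewrite !mulr_sumr; apply: le_trans (ler_sum _ (fun i _ => vertex_term_le i)) _.
by rewrite big_split /= sumr_const card_ord -[_ *+ m]mulr_natl !mulrA.
Qed.

Lemma edge_term_le (i i' : 'I_m) : i' != i ->
  l%:R * a * tY i i' <= n%:R * b * tY' i i' + (l%:R * a - n%:R * b) * CY `^ p.
Proof.
move=> neq_i; have two_le_m : (1 < m)%N.
  by have := max_card [set i; i']; rewrite cards2 eq_sym neq_i card_ord.
apply: mixture_le => //.
  by rewrite mulr_ge0 ?edge_weight_ge0 //= edge_weight_le // (leq_trans two_le_m).
have neq_pi : piv i != piv i' by rewrite (inj_eq perm_inj) eq_sym.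
have := ext_f_agree y0 f neq_pi (@s_agrees_widen i) (@s_agrees_widen i').
by case=> ->; [left|right].
Qed.

Lemma edge_row_le (i : 'I_m) :
  l%:R * a * \sum_(i' < m) tY i i' <=
  n%:R * b * \sum_(i' < m) tY' i i' + (m%:R - 1) * (l%:R * a - n%:R * b) * CY `^ p.
Proof.
have diag_tY : tY i i = 0 by rewrite !(e_diag, f_diag) dY_y0 powR0 ?gt_eqF.
have diag_tY' : tY' i i = 0.
  by rewrite ext_f_diag // e_diag /dY_ext dY_y0 powR0 ?gt_eqF.
rewrite (bigD1 i) //= [X in _ <= _ * X + _](bigD1 i) //= diag_tY diag_tY' !add0r !mulr_sumr.
apply: le_trans (ler_sum _ (fun i' neq_i => edge_term_le neq_i)) _.
rewrite big_split /= sumr_const cardC1 card_ord -[_ *+ m.-1]mulr_natl mulrA natr_predB //.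
exact: leq_ltn_trans (leq0n i) (ltn_ord i).
Qed.

Lemma edge_sum_le :
  l%:R * a * \sum_(i < m) \sum_(i' < m) tY i i' <=
  n%:R * b * \sum_(i < m) \sum_(i' < m) tY' i i'
  + m%:R * (m%:R - 1) * (l%:R * a - n%:R * b) * CY `^ p.
Proof.
rewrite !mulr_sumr; apply: le_trans (ler_sum _ (fun i _ => edge_row_le i)) _.
by rewrite big_split /= sumr_const card_ord -[_ *+ m]mulr_natl !mulrA.
Qed.

Lemma gospa_cost_le :
  l%:R * gospa_cost dX dY p C1 CY hmn v e w f s <=
  n%:R * gospa_cost (dX_ext dX p C1 CY) (dY_ext dY CY) p C1 CY hml
    (fun i => Orig (v i)) (fun i i' => Orig (e i i')) (ext_w w) (ext_f y0 f) pi.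
Proof.
rewrite /gospa_cost -/(edge_weight R n) -/(edge_weight R l) !big_split /=.
rewrite !sumr_const !card_ord (natrB _ hmn) (natrB _ hml) -2![(_ * _) *+ m]mulr_natr.
apply: weighted_cost_le vertex_sum_le edge_sum_le _; rewrite ?ler0n ?powR_ge0 //.
exact: edge_weight_pred_le.
Qed.
End CostComparison.

Theorem lemmaB (R : realType) (X Y : Type) (dX : X -> X -> R) (dY : Y -> Y -> R)
  (CX CY C1 p : R) (y0 : Y)
  (hX : pseudometric dX) (hY : pseudometric dY)
  (hCX0 : 0 <= CX) (hCY0 : 0 <= CY) (hC10 : 0 <= C1)
  (hdX : diam_le dX CX) (hdY : diam_le dY CY)
  (hp : 1 <= p) (hC1 : CX `^ p + CY `^ p / 2 <= C1 `^ p)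
  (m n l : nat) (hmn : (m <= n)%N) (hnl : (n <= l)%N) (hn : (1 <= n)%N)
  (v : 'I_m -> X) (e : 'I_m -> 'I_m -> Y) (w : 'I_n -> X) (f : 'I_n -> 'I_n -> Y)
  (hG1 : is_graph y0 v e) (hG2 : is_graph y0 w f) :
  gospa1 dX dY p C1 CY hmn v e w f <=
  gospa1 (dX_ext dX p C1 CY) (dY_ext dY CY) p C1 CY (leq_trans hmn hnl)
    (fun i => Orig (v i)) (fun i j => Orig (e i j))
    (@ext_w X n l w) (@ext_f Y y0 n l f).
Proof.
have p_gt0 : 0 < p by apply: lt_le_trans hp.
have dX_pow_le x x' : dX x x' `^ p <= C1 `^ p - CY `^ p / 2.
  by have := powR_le_diam (ltW p_gt0) hX hdX x x'; lra.
have zX_ge0 : 0 <= C1 `^ p - CY `^ p / 2 by have := powR_ge0 CX p; lra.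
have dY_pow_le := powR_le_diam (ltW p_gt0) hY hdY.
have dY_y0 : dY y0 y0 = 0 by case: hY.
case: hG1 hG2 => _ e_diag [_ f_diag].
apply: root_normalized_le; rewrite ?ltr0n ?(leq_trans hn hnl) //.
1,2: by apply: le_bigmin => [|pi]; rewrite gospa_cost_ge0.
apply: bigmin_mul_le => [||pi]; rewrite ?ler0n ?ltr0n //.
case: (perm_restrict hnl pi) => s s_agrees; exists s.
exact: (gospa_cost_le p_gt0 zX_ge0 dX_pow_le dY_pow_le dY_y0 hmn hn v w
  e_diag f_diag s_agrees).
Qed.
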